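(* Let $k\ge 0$ and let $A$ be a real symmetric matrix indexed by $\mathcal{F}'_k$. Then there exists an isolate-indifferent, reflection positive graph parameter $f$ with $A_{F,G}=f(FG)$ for all $F,G\in\mathcal{F}'_k$ if and only if for every $m\ge k$ there exists a positive semidefinite matrix $B$ indexed by $\mathcal{F}'_m$ such that $B_{F_1,G_1}=B_{F_2,G_2}$ whenever $F_1G_1\simeq F_2G_2$, and $B_{F^{+m},G^{+m}}=A_{F,G}$ for all $F,G\in\mathcal{F}'_k$.
   Context: All graphs are finite and simple. $\mathcal{F}'_k$ denotes the set of flat $k$-labeled graphs, i.e. graphs on node set $[k]=\{1,\dots,k\}$ with node $i$ labeled $i$. For $F,G\in\mathcal{F}'_k$, $FG$ is the graph on $[k]$ with edge set $E(F)\cup E(G)$. For $F\in\mathcal{F}'_k$ and $m\ge k$, $F^{+m}\in\mathcal{F}'_m$ is obtained by adding isolated nodes $k+1,\dots,m$. For graphs $F,G$, $F\simeq G$ means they become isomorphic after deleting isolated nodes. A graph parameter is a real function on isomorphism types of graphs; it is isolate-indifferent if $f(G)=f(G')$ whenever $G\simeq G'$. A $k$-labeled graph is a graph with $k$ nodes labeled $1,\dots,k$ (other nodes unlabeled); the product of two $k$-labeled graphs is their disjoint union with equally labeled nodes identified and multiple edges merged. $f$ is reflection positive if for every $k$ the matrix indexed by $k$-labeled graphs with entries $f(F_1F_2)$ is positive semidefinite (all finite principal submatrices PSD). *)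

From mathcomp Require Import all_boot.
From Stdlib Require Import Reals.
Unset Printing Implicit Defensive.

Definition flatgraph (n : nat) :=
  {E : {set {set 'I_n}} | [forall e in E, #|e| == 2]}.

Definition edges {n} (F : flatgraph n) : {set {set 'I_n}} := val F.

Record graph := Graph { gn : nat; gE : flatgraph gn }.

Definition adj (G : graph) (i j : 'I_(gn G)) : bool := [set i; j] \in edges (gE G).

Lemma from_rel_proof n (r : rel 'I_n) :
  [forall e in [set e : {set 'I_n} | [exists i, exists j,
        (i != j) && r i j && (e == [set i; j])]], #|e| == 2].
Proof.
apply/forall_inP => e; rewrite inE => /existsP [i /existsP [j /andP [/andP [ij _] /eqP ->]]].
by rewrite cards2 ij.
Qed.

Definition from_rel {n} (r : rel 'I_n) : flatgraph n :=
  exist (fun E : {set {set 'I_n}} => [forall e in E, #|e| == 2]) _ (from_rel_proof n r).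

Definition iso (G H : graph) : Prop :=
  exists f : 'I_(gn G) -> 'I_(gn H),
    bijective f /\ forall i j, adj H (f i) (f j) = adj G i j.

Definition non_isolated (G : graph) : {set 'I_(gn G)} := [set i | [exists j, adj G i j]].

Definition induced (G : graph) (S : {set 'I_(gn G)}) : graph :=
  Graph _ (from_rel (fun x y : 'I_#|S| => adj G (enum_val x) (enum_val y))).

Definition del_isolated (G : graph) : graph := induced G (non_isolated G).

Definition sim (G H : graph) : Prop := iso (del_isolated G) (del_isolated H).

Definition graph_param (f : graph -> R) : Prop := forall G H, iso G H -> f G = f H.

Definition isolate_indifferent (f : graph -> R) : Prop := forall G H, sim G H -> f G = f H.

Definition nadj (G : graph) (u v : nat) : bool :=
  [exists i : 'I_(gn G), exists j : 'I_(gn G), (nat_of_ord i == u) && (nat_of_ord j == v) && adj G i j].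

(* k-labeled graphs: node i (< k) carries label i+1, the other nodes are unlabeled. *)
Definition klgraph (k : nat) := {G : graph | k <= gn G}.

(* product of k-labeled graphs: disjoint union, equally labeled nodes identified,
   multiple edges merged.  Nodes 0..n1-1 are those of F1; nodes n1..n1+n2-k-1 are the
   unlabeled nodes k..n2-1 of F2. *)
Definition kprod {k} (F1 F2 : klgraph k) : graph :=
  let G1 := val F1 in let G2 := val F2 in
  let n1 := gn G1 in let n2 := gn G2 in
  let m2 := fun u : nat => if u < k then u else if n1 <= u then u - n1 + k else n2 in
  Graph _ (from_rel (fun x y : 'I_(n1 + n2 - k) =>
            nadj G1 x y || nadj G2 (m2 x) (m2 y))).

Definition psd {T : finType} (M : T -> T -> R) : Prop :=
  (forall i j, M i j = M j i) /\
  forall c : T -> R,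
    (0 <= \big[Rplus/0%R]_(i : T) \big[Rplus/0%R]_(j : T) (c i * M i j * c j))%R.

(* reflection positivity: all finite principal submatrices of the connection matrices
   (f(F1 F2)) indexed by k-labeled graphs are PSD, for every k *)
Definition reflection_positive (f : graph -> R) : Prop :=
  forall k n (F : 'I_n -> klgraph k), psd (fun i j => f (kprod (F i) (F j))).

Lemma flat_prod_proof k (F G : flatgraph k) : [forall e in edges F :|: edges G, #|e| == 2].
Proof.
apply/forall_inP => e; rewrite inE => /orP [] He.
  exact: (forall_inP (valP F) e He).
exact: (forall_inP (valP G) e He).
Qed.

Definition flat_prod {k} (F G : flatgraph k) : flatgraph k := exist (fun E : {set {set 'I_k}} => [forall e in E, #|e| == 2]) _ (flat_prod_proof k F G).

Definition as_graph {k} (F : flatgraph k) : graph := Graph k F.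

(* F^{+m}: add isolated nodes k..m-1 *)
Definition pad {k} m (F : flatgraph k) : flatgraph m :=
  from_rel (fun x y : 'I_m => nadj (as_graph F) x y).

(* Forward direction: B(F,G) := f(FG) is a principal submatrix of the m-th connection
   matrix of f, since a flat m-labeled graph is an m-labeled graph without unlabeled
   nodes and the product of two of them is their flat product.

   Backward direction: from the matrices B_m every graph G gets a "value at level m",
   v_m(G) := B_m(G^{+m}, empty), which depends only on G up to isolated nodes and lies
   in [0, A(empty,empty)] by the 2x2 minors of B_m.  Graphs are countable, so a
   bisection (compactness) argument yields a cluster point f of the sequence (v_m);
   isolate-indifference and f(FG) = A(F,G) hold for every v_m, hence for f.  For
   reflection positivity, k-labeled graphs F_1..F_n are copied into N pairwise disjoint
   "slots" of m nodes sharing the labeled nodes; copies in different slots multiply to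
   F_i F_j, so positivity of B_m gives 0 <= A0 * S + (N-1) * Q_m, where Q_m is the
   quadratic form of (v_m(F_i F_j)) at coefficients c, A0 = A(empty,empty) and
   S = sum |c_i| |c_j|; passing to the cluster point and letting N grow gives Q >= 0. *)

From HB Require Import structures.
From mathcomp Require Import all_boot zify.
From Stdlib Require Import Reals Lra Lia Classical ClassicalEpsilon.
Unset Printing Implicit Defensive.

HB.instance Definition _ := Monoid.isComLaw.Build R 0%R Rplus
  (fun a b c => esym (Rplus_assoc a b c)) Rplus_comm Rplus_0_l.

Section RealSums.
Local Open Scope R_scope.

Lemma eq_of_close (x y : R) : (forall eps, 0 < eps -> Rabs (x - y) <= eps) -> x = y.
Proof.
move=> close; apply: Rminus_diag_uniq; case: (Req_dec (x - y) 0) => // ne.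
have := close (Rabs (x - y) / 2); have := Rabs_pos_lt _ ne; lra.
Qed.

Lemma sumR_le (I : finType) (P : pred I) (F G : I -> R) :
  (forall i, P i -> F i <= G i) ->
  \big[Rplus/0]_(i | P i) F i <= \big[Rplus/0]_(i | P i) G i.
Proof. by move=> FG; apply: (big_ind2 (fun a b => a <= b)) => // *; lra. Qed.

Lemma sumR_mull (I : finType) (P : pred I) (c : R) (F : I -> R) :
  \big[Rplus/0]_(i | P i) (c * F i) = c * \big[Rplus/0]_(i | P i) F i.
Proof.
apply: (big_ind2 (fun b a => a = c * b)); first by rewrite Rmult_0_r.
  by move=> a1 a2 b1 b2 -> ->; rewrite Rmult_plus_distr_l.
by [].
Qed.

Lemma sumR_const (I : finType) (P : pred I) (x : R) :
  \big[Rplus/0]_(i | P i) x = INR #|P| * x.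
Proof.
rewrite big_const; elim: #|P| => [|n IH]; first by rewrite /=; lra.
by rewrite S_INR /= IH; lra.
Qed.

Lemma sumR_pair {I J : finType} (G : I * J -> R) :
  \big[Rplus/0]_(a : I * J) G a = \big[Rplus/0]_(i : I) \big[Rplus/0]_(j : J) G (i, j).
Proof. by rewrite pair_bigA; apply: eq_bigr => -[]. Qed.

Lemma sum_push {I T : finType} (Y : I -> T) (d : I -> R) (G : T -> R) :
  \big[Rplus/0]_(a : I) (d a * G (Y a)) =
  \big[Rplus/0]_(Z : T) ((\big[Rplus/0]_(a | Y a == Z) d a) * G Z).
Proof.
rewrite (partition_big Y predT) //; apply: eq_bigr => Z _.
rewrite Rmult_comm -sumR_mull; apply: eq_bigr => a /eqP <-; exact: Rmult_comm.
Qed.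

Definition qform {T : finType} (M : T -> T -> R) (c : T -> R) : R :=
  \big[Rplus/0]_(i : T) \big[Rplus/0]_(j : T) (c i * M i j * c j).

Lemma qform_pullback {I T : finType} (M : T -> T -> R) (Y : I -> T) (d : I -> R) :
  qform (fun a b => M (Y a) (Y b)) d =
  qform M (fun Z => \big[Rplus/0]_(a | Y a == Z) d a).
Proof.
have row a : \big[Rplus/0]_(b : I) (d a * M (Y a) (Y b) * d b) =
    d a * \big[Rplus/0]_(Z : T) ((\big[Rplus/0]_(b | Y b == Z) d b) * M (Y a) Z).
  rewrite -(sum_push Y d (M (Y a))) -sumR_mull.
  by apply: eq_bigr => b _; ring.
rewrite /qform (eq_bigr _ (fun a _ => row a)).
rewrite (sum_push Y d (fun W => \big[Rplus/0]_(Z : T)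
                            ((\big[Rplus/0]_(b | Y b == Z) d b) * M W Z))).
by apply: eq_bigr => W _; rewrite -sumR_mull; apply: eq_bigr => Z _; ring.
Qed.

Lemma psd_pullback {I T : finType} (M : T -> T -> R) (Y : I -> T) :
  psd M -> psd (fun a b : I => M (Y a) (Y b)).
Proof.
move=> [M_sym M_pos]; split=> [a b|d]; first exact: M_sym.
by change (0 <= qform (fun a b => M (Y a) (Y b)) d); rewrite qform_pullback; exact: M_pos.
Qed.

Lemma psd_two {T : finType} (M : T -> T -> R) X W x w : psd M ->
  0 <= x * M X X * x + x * M X W * w + w * M W X * x + w * M W W * w.
Proof.
move=> /(psd_pullback _ (fun b : bool => if b then X else W)) [_].
by move=> /(_ (fun b => if b then x else w)); rewrite !big_bool /=; lra.
Qed.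

Lemma quad_term_le x y z e : Rabs y <= e -> x * y * z <= e * (Rabs x * Rabs z).
Proof.
move=> ye; apply: Rle_trans (Rle_abs _) _; rewrite !Rabs_mult.
have := Rmult_le_pos _ _ (Rabs_pos x) (Rabs_pos z); nra.
Qed.

Lemma quad_term_close x y z w e : Rabs (y - w) <= e ->
  x * y * z <= x * w * z + e * (Rabs x * Rabs z).
Proof.
move=> /(quad_term_le x _ z) close.
have -> : x * y * z = x * w * z + x * (y - w) * z by ring.
lra.
Qed.

(* If the bounds 0 <= D + (N-1) (Q + eps S) hold for all N >= 2 and eps > 0, then
   Q >= 0: this is how reflection positivity is recovered from N slots. *)
Lemma nonneg_of_slot_bounds {D S Q : R} : 0 <= S ->
  (forall (N : nat) eps, (1 < N)%nat -> 0 < eps -> 0 <= D + (INR N - 1) * (Q + eps * S)) ->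
  0 <= Q.
Proof.
move=> S_ge0 bound; apply: Rnot_lt_le => Q_neg.
pose eps := - Q / (2 * (S + 1)).
have eps_pos : 0 < eps by apply: Rdiv_lt_0_compat; lra.
have eps_small : eps * S <= - Q / 2.
  have : eps * (S + 1) = - Q / 2 by rewrite /eps; field; lra.
  nra.
have [n n_big] := INR_archimed (- Q / 2) D ltac:(lra).
have := bound n.+2 eps isT eps_pos; rewrite !S_INR.
have := pos_INR n; nra.
Qed.

End RealSums.

(* The proof bisects boxes, keeping at each
   step a half that still contains infinitely many points of the sequence. *)
Section ClusterPoint.
Local Open Scope R_scope.
Variables (u : nat -> nat -> R) (C : R).
Hypothesis u_bounded : forall m i, 0 <= u m i <= C.

Record box := Box { lo : nat -> R; hi : nat -> R }.

Definition in_box (b : box) (m : nat) := forall i, lo b i <= u m i <= hi b i.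
Definition frequent (b : box) := forall N, exists2 m, (N <= m)%nat & in_box b m.
Definition proper (b : box) := forall i, lo b i <= hi b i.
Definition subbox (b' b : box) := forall i, lo b i <= lo b' i /\ hi b' i <= hi b i.
Definition width (b : box) (i : nat) := hi b i - lo b i.

Definition upd (f : nat -> R) (i : nat) (x : R) : nat -> R :=
  fun j => if j == i then x else f j.

Definition halve (i : nat) (b : box) : box :=
  let mid := (lo b i + hi b i) / 2 in
  let lower := Box (lo b) (upd (hi b) i mid) in
  if excluded_middle_informative (frequent lower) then lower
  else Box (upd (lo b) i mid) (hi b).

Lemma subbox_trans {b1 b2 b3} : subbox b1 b2 -> subbox b2 b3 -> subbox b1 b3.
Proof. by move=> s12 s23 i; have := s12 i; have := s23 i; lra. Qed.

Lemma subbox_width {b' b} i : proper b' -> subbox b' b -> width b' i <= width b i.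
Proof. by move=> pb' sb; have := sb i; rewrite /width; lra. Qed.

(* If the lower half holds only finitely many points, the upper half holds all the
   others. *)
Lemma halve_frequent i b : frequent b -> frequent (halve i b).
Proof.
move=> fb; rewrite /halve; case: excluded_middle_informative => // not_lower N.
have [N0 N0_lower] := not_all_ex_not _ _ not_lower.
have [m Nm mb] := fb (maxn N N0).
have mid_le : (lo b i + hi b i) / 2 <= u m i.
  apply: Rnot_lt_le => below; apply: N0_lower; exists m; first by lia.
  by move=> j; rewrite /upd /=; case: eqP => [->|_]; [have := mb i; lra | exact: mb].
exists m; first by lia.
by move=> j; rewrite /upd /=; case: eqP => [->|_]; [have := mb i; lra | exact: mb].
Qed.

Lemma halve_spec i b : proper b ->
  [/\ proper (halve i b), subbox (halve i b) b & width (halve i b) i <= width b i / 2].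
Proof.
move=> pb; rewrite /halve /width /upd.
case: excluded_middle_informative => [?|?]; split=> [j|j|] /=; rewrite ?eqxx;
  have := pb i; try case: eqP => [->|_]; try lra; have := pb j; lra.
Qed.

Definition halve_all (l : seq nat) (b : box) : box := foldl (fun b i => halve i b) b l.

Lemma halve_all_spec l b : proper b -> frequent b ->
  [/\ proper (halve_all l b), frequent (halve_all l b), subbox (halve_all l b) b
    & forall i, i \in l -> width (halve_all l b) i <= width b i / 2].
Proof.
elim: l b => [|i l IH] b pb fb /=.
  by split=> // j; split; lra.
have [pb' sb' wb'] := halve_spec i b pb.
have [p2 f2 s2 w2] := IH _ pb' (halve_frequent i b fb).
split=> //; first exact: subbox_trans s2 sb'.
move=> j; rewrite in_cons => /orP [/eqP ->|jl].
  by have := subbox_width i p2 s2; lra.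
by have := w2 j jl; have := subbox_width j pb' sb'; lra.
Qed.

Fixpoint stage (r : nat) : box :=
  if r is r'.+1 then halve_all (iota 0 r) (stage r') else Box (fun _ => 0) (fun _ => C).

Lemma stage_spec r : proper (stage r) /\ frequent (stage r).
Proof.
elim: r => [|r [pr fr]] /=.
  split=> [i|N] /=; first by have := u_bounded 0 i; lra.
  by exists N => // i; exact: u_bounded.
by have [] := halve_all_spec (iota 0 r.+1) _ pr fr.
Qed.

Lemma stage_sub r t : subbox (stage (r + t)) (stage r).
Proof.
elim: t => [|t IH]; first by rewrite addn0 => i; lra.
rewrite addnS; apply: subbox_trans IH => /=.
by have [pr fr] := stage_spec (r + t); have [] := halve_all_spec (iota 0 (r + t).+1) _ pr fr.
Qed.

Lemma stage_width i t : width (stage (i + t)) i <= C * (/ 2) ^ t.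
Proof.
elim: t => [|t IH]; first by have := stage_sub 0 i i; rewrite addn0 add0n /width /=; lra.
rewrite addnS -tech_pow_Rmult.
change (stage (i + t).+1) with (halve_all (iota 0 (i + t).+1) (stage (i + t))).
have [pr fr] := stage_spec (i + t).
have [_ _ _ halved] := halve_all_spec (iota 0 (i + t).+1) _ pr fr.
have := halved i ltac:(rewrite mem_iota; lia).
have -> : C * (/ 2 * (/ 2) ^ t) = C * (/ 2) ^ t / 2 by field.
lra.
Qed.

(* All stages are nested, so lower ends never exceed upper ends. *)
Lemma lo_le_hi r s i : lo (stage r) i <= hi (stage s) i.
Proof.
have [ps _] := stage_spec (r + s).
have [lo_r _] := stage_sub r s i; have [_ hi_s] := stage_sub s r i.
rewrite addnC in hi_s; have := ps i; lra.
Qed.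

(* The cluster point takes in each coordinate the supremum of the lower ends. *)
Theorem bounded_cluster_point : exists a : nat -> R, forall (L N : nat) eps, 0 < eps ->
  exists2 m, (N <= m)%nat & forall i, (i <= L)%nat -> Rabs (u m i - a i) <= eps.
Proof.
have ub i : bound (fun x => exists r, x = lo (stage r) i).
  by exists (hi (stage 0) i) => x [r ->]; exact: lo_le_hi.
have ne i : exists x, exists r, x = lo (stage r) i by exists (lo (stage 0) i), 0%nat.
exists (fun i => proj1_sig (completeness _ (ub i) (ne i))) => L N eps eps_pos.
have [t small] : exists t, C * (/ 2) ^ t < eps.
  have C_ge0 : 0 <= C by have := u_bounded 0 0; lra.
  have [t ht] := pow_lt_1_zero (/ 2) ltac:(rewrite Rabs_pos_eq; lra)
                   (eps / (C + 1)) ltac:(apply: Rdiv_lt_0_compat; lra).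
  exists t; have := ht t (Nat.le_refl t); rewrite Rabs_pos_eq; last by apply: pow_le; lra.
  have : eps / (C + 1) * (C + 1) = eps by field; lra.
  have := pow_le (/ 2) t ltac:(lra); nra.
have [_ freq] := stage_spec (L + t).
have [m Nm mbox] := freq N.
exists m => // i iL.
case: completeness => a [a_ub a_lub] /=.
have a_lo : lo (stage (L + t)) i <= a by apply: a_ub; exists (L + t)%nat.
have a_hi : a <= hi (stage (L + t)) i by apply: a_lub => x [r ->]; exact: lo_le_hi.
have narrow : width (stage (L + t)) i <= width (stage (i + t)) i.
  have -> : (L + t = (i + t) + (L - i))%nat by lia.
  by apply: subbox_width; [exact: (stage_spec _).1 | exact: stage_sub].
have := stage_width i t; have := mbox i; rewrite /width in narrow *.
by move=> *; apply: Rabs_le; lra.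
Qed.

End ClusterPoint.

Lemma edge_card (G : graph) e : e \in edges (gE G) -> #|e| = 2.
Proof. by move=> He; apply/eqP; exact: (forall_inP (valP (gE G)) e He). Qed.

Lemma adj_irr (G : graph) x : adj G x x = false.
Proof. by apply/negP => /edge_card; rewrite setUid cards1. Qed.

Lemma adj_sym (G : graph) x y : adj G x y = adj G y x.
Proof. by rewrite /adj setUC. Qed.

Lemma set2_inj {T : finType} {x y i j : T} : i != j -> [set x; y] = [set i; j] ->
  (x = i /\ y = j) \/ (x = j /\ y = i).
Proof.
move=> ij E.
have hx : x \in [set i; j] by rewrite -E !inE eqxx.
have hy : y \in [set i; j] by rewrite -E !inE eqxx orbT.
have hi : i \in [set x; y] by rewrite E !inE eqxx.
have hj : j \in [set x; y] by rewrite E !inE eqxx orbT.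
move: hx hy hi hj; rewrite !inE.
move=> /orP [] /eqP hx /orP [] /eqP hy /orP [] /eqP hi /orP [] /eqP hj; subst;
  rewrite ?eqxx in ij; auto.
Qed.

Lemma adj_from_rel n (r : rel 'I_n) x y :
  adj (Graph n (from_rel r)) x y = (x != y) && (r x y || r y x).
Proof.
rewrite /adj /edges /= inE; apply/existsP/idP.
- move=> [i /existsP [j /andP [/andP [ij rij] /eqP E]]].
  by have [[-> ->]|[-> ->]] := set2_inj ij E; rewrite ?rij ?orbT ?ij // eq_sym ij.
- case/andP => xy /orP [] rxy.
  + by exists x; apply/existsP; exists y; rewrite xy rxy eqxx.
  + by exists y; apply/existsP; exists x; rewrite eq_sym xy rxy setUC eqxx.
Qed.

Lemma nadj_bound {G : graph} {u v} : nadj G u v -> (u < gn G) && (v < gn G).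
Proof.
by move=> /existsP [i /existsP [j /andP [/andP [/eqP <- /eqP <-] _]]]; rewrite !ltn_ord.
Qed.

Lemma nadjE (G : graph) (a b : 'I_(gn G)) : nadj G a b = adj G a b.
Proof.
apply/existsP/idP => [[i /existsP [j /andP [/andP [/eqP ia /eqP jb] Gij]]]|Gab].
  by rewrite -(val_inj ia) -(val_inj jb).
by exists a; apply/existsP; exists b; rewrite !eqxx Gab.
Qed.

Lemma nadj_outl (G : graph) u v : gn G <= u -> nadj G u v = false.
Proof.
by move=> Gu; apply/negbTE/negP => /nadj_bound /andP [uG _]; rewrite ltnNge Gu in uG.
Qed.

Lemma nadj_outr (G : graph) u v : gn G <= v -> nadj G u v = false.
Proof.
by move=> Gv; apply/negbTE/negP => /nadj_bound /andP [_ vG]; rewrite ltnNge Gv in vG.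
Qed.

Lemma nadj_sym (G : graph) u v : nadj G u v = nadj G v u.
Proof.
apply/idP/idP => /[dup] /nadj_bound /andP [hu hv].
- by rewrite -[u]/(val (Ordinal hu)) -[v]/(val (Ordinal hv)) !nadjE adj_sym.
- by rewrite -[u]/(val (Ordinal hv)) -[v]/(val (Ordinal hu)) !nadjE adj_sym.
Qed.

Lemma nadj_irr (G : graph) u : nadj G u u = false.
Proof.
apply/negbTE/negP => /[dup] /nadj_bound /andP [hu _].
by rewrite -[u]/(val (Ordinal hu)) nadjE adj_irr.
Qed.

Lemma nadj_from_rel n (r : rel 'I_n) (R : nat -> nat -> bool) :
  (forall x y : 'I_n, r x y = R x y) -> forall u v,
  nadj (Graph n (from_rel r)) u v = [&& u < n, v < n, u != v & R u v || R v u].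
Proof.
move=> rR u v.
case: (ltnP u n) => hu; last by rewrite nadj_outl.
case: (ltnP v n) => hv; last by rewrite nadj_outr.
by rewrite -[u]/(val (Ordinal hu)) -[v]/(val (Ordinal hv)) nadjE adj_from_rel !rR.
Qed.

(* Two numberings of the same node of an n-node graph: equal names, or both beyond
   the last node. *)
Definition same_node (n x y : nat) : bool := (x == y) || (n <= x) && (n <= y).

Lemma nadj_same_node (G : graph) x x' y y' :
  same_node (gn G) x x' -> same_node (gn G) y y' -> nadj G x y = nadj G x' y'.
Proof.
rewrite /same_node => /orP [/eqP ->|/andP [Gx Gx']]; last by move=> _; rewrite !nadj_outl.
by move=> /orP [/eqP -> //|/andP [Gy Gy']]; rewrite !nadj_outr.
Qed.

Lemma iso_sym {G H} : iso G H -> iso H G.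
Proof.
move=> [f [[g fg gf] fadj]]; exists g; split; first by exists f.
by move=> i j; rewrite -fadj !gf.
Qed.

Lemma iso_trans {G H K} : iso G H -> iso H K -> iso G K.
Proof.
move=> [f [bf fadj]] [g [bg gadj]]; exists (g \o f); split; first exact: bij_comp.
by move=> i j /=; rewrite gadj fadj.
Qed.

Lemma sim_sym {G H} : sim G H -> sim H G.
Proof. exact: iso_sym. Qed.

Lemma sim_trans {G H K} : sim G H -> sim H K -> sim G K.
Proof. exact: iso_trans. Qed.

Lemma adj_del_isolated (G : graph) (x y : 'I_(gn (del_isolated G))) :
  adj (del_isolated G) x y = (x != y) && adj G (enum_val x) (enum_val y).
Proof. by rewrite /del_isolated /induced adj_from_rel adj_sym orbb. Qed.

Lemma sim_of_node_map (G H : graph) (phi : nat -> nat) :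
  (forall u v, u < gn G -> v < gn G -> nadj H (phi u) (phi v) = nadj G u v) ->
  (forall u v, u < gn G -> v < gn G -> phi u = phi v -> u = v) ->
  (forall a b, nadj H a b -> exists2 u, u < gn G & phi u = a) ->
  sim G H.
Proof.
move=> phi_adj phi_inj phi_onto.
pose SG := non_isolated G; pose SH := non_isolated H.
have ex_f (x : 'I_#|SG|) : exists y : 'I_#|SH|, nat_of_ord (enum_val y) = phi (enum_val x).
  have : enum_val x \in SG by exact: enum_valP.
  rewrite inE => /existsP [j Gxj].
  have Hxj : nadj H (phi (enum_val x)) (phi j) by rewrite phi_adj // nadjE.
  case/andP: (nadj_bound Hxj) => ha hb.
  have aSH : Ordinal ha \in SH by rewrite inE; apply/existsP; exists (Ordinal hb); rewrite -nadjE.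
  by exists (enum_rank_in aSH (Ordinal ha)); rewrite enum_rankK_in.
have ex_g (y : 'I_#|SH|) : exists x : 'I_#|SG|, phi (enum_val x) = nat_of_ord (enum_val y).
  have : enum_val y \in SH by exact: enum_valP.
  rewrite inE => /existsP [j Hyj]; rewrite -nadjE in Hyj.
  have [u hu eu] := phi_onto _ _ Hyj.
  have [w hw ew] := phi_onto _ _ (etrans (nadj_sym _ _ _) Hyj).
  have uSG : Ordinal hu \in SG.
    by rewrite inE; apply/existsP; exists (Ordinal hw); rewrite -nadjE -phi_adj // eu ew.
  by exists (enum_rank_in uSG (Ordinal hu)); rewrite enum_rankK_in.
have [f fE] := choice _ ex_f.
have [g gE] := choice _ ex_g.
have fK : cancel g f by move=> y; apply/enum_val_inj/ord_inj; rewrite fE gE.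
have gK : cancel f g.
  by move=> x; apply/enum_val_inj/ord_inj/phi_inj; rewrite ?ltn_ord // gE fE.
exists f; split; first by exists g.
by move=> x y; rewrite !adj_del_isolated (can_eq gK) -!nadjE !fE phi_adj ?ltn_ord.
Qed.

Lemma sim_of_same_nadj (G H : graph) : (forall u v, nadj H u v = nadj G u v) -> sim G H.
Proof.
move=> GH; apply: (@sim_of_node_map G H (fun x => x)) => // a b.
by rewrite GH => /nadj_bound /andP [ha _]; exists a.
Qed.

Lemma iso_sim G H : iso G H -> sim G H.
Proof.
move=> [f [[g fg gf] fadj]].
pose phi u := oapp (fun x : 'I_(gn G) => val (f x)) u (insub u).
have phiE (x : 'I_(gn G)) : phi x = f x by rewrite /phi valK.
apply: (@sim_of_node_map G H phi).
- move=> u v hu hv.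
  by rewrite -[u]/(val (Ordinal hu)) -[v]/(val (Ordinal hv)) !phiE !nadjE fadj.
- move=> u v hu hv.
  rewrite -[u]/(val (Ordinal hu)) -[v]/(val (Ordinal hv)) !phiE => /val_inj e.
  by rewrite (can_inj fg e).
- move=> a b /nadj_bound /andP [ha _].
  by exists (g (Ordinal ha)); rewrite ?ltn_ord // phiE gf.
Qed.

Lemma nadj_flat_prod k (F G : flatgraph k) u v :
  nadj (as_graph (flat_prod F G)) u v = nadj (as_graph F) u v || nadj (as_graph G) u v.
Proof.
case: (ltnP u k) => hu; last by rewrite !nadj_outl.
case: (ltnP v k) => hv; last by rewrite !nadj_outr.
by rewrite -[u]/(val (Ordinal hu)) -[v]/(val (Ordinal hv)) !nadjE /adj /= inE.
Qed.

Lemma nadj_pad k m (F : flatgraph k) u v : k <= m ->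
  nadj (as_graph (pad m F)) u v = nadj (as_graph F) u v.
Proof.
move=> km; rewrite /pad /as_graph (@nadj_from_rel m _ (fun u v => nadj (Graph k F) u v)) //.
rewrite (nadj_sym _ v u) orbb.
case Fuv: (nadj _ u v); rewrite ?andbF //.
case/andP: (nadj_bound Fuv) => /= hu hv.
have -> : u != v by apply: contraTneq Fuv => ->; rewrite nadj_irr.
by rewrite (leq_trans hu km) (leq_trans hv km).
Qed.

Lemma edgeless_proof n : [forall e in (set0 : {set {set 'I_n}}), #|e| == 2].
Proof. by apply/forall_inP => e; rewrite inE. Qed.

Definition edgeless (n : nat) : flatgraph n := exist _ set0 (edgeless_proof n).

Lemma nadj_edgeless n u v : nadj (as_graph (edgeless n)) u v = false.
Proof.
case: (ltnP u n) => hu; last by rewrite nadj_outl.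
case: (ltnP v n) => hv; last by rewrite nadj_outr.
by rewrite -[u]/(val (Ordinal hu)) -[v]/(val (Ordinal hv)) nadjE /adj /= inE.
Qed.

Lemma pad_sim {m} {G : graph} : gn G <= m ->
  sim G (as_graph (flat_prod (pad m (gE G)) (edgeless m))).
Proof.
case: G => n E /= nm; apply: sim_of_same_nadj => u v.
by rewrite nadj_flat_prod nadj_edgeless orbF nadj_pad.
Qed.

(* The product of k-labeled graphs: its nodes are those of F1, followed by the
   unlabeled nodes of F2; kprod_map renames the nodes of F2 accordingly. *)
Definition kprod_map (p n1 n2 u : nat) : nat :=
  if u < p then u else if n1 <= u then u - n1 + p else n2.

Lemma nadj_kprod p (F1 F2 : klgraph p) u v :
  let n1 := gn (val F1) in let n2 := gn (val F2) in
  nadj (kprod F1 F2) u v =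
  [&& u < n1 + n2 - p, v < n1 + n2 - p, u != v &
     (nadj (val F1) u v || nadj (val F2) (kprod_map p n1 n2 u) (kprod_map p n1 n2 v)) ||
     (nadj (val F1) v u || nadj (val F2) (kprod_map p n1 n2 v) (kprod_map p n1 n2 u))].
Proof.
move=> n1 n2; apply: (@nadj_from_rel _ _ (fun u v =>
  nadj (val F1) u v || nadj (val F2) (kprod_map p n1 n2 u) (kprod_map p n1 n2 v))).
by [].
Qed.

Definition graph_code (G : graph) : nat :=
  pickle (gn G, index (gE G) (enum {: flatgraph (gn G)})).

Definition graph_decode (i : nat) : graph :=
  if (unpickle i : option (nat * nat)) is Some (n, r)
  then Graph n (nth (edgeless n) (enum {: flatgraph n}) r)
  else Graph 0 (edgeless 0).

Lemma graph_codeK : cancel graph_code graph_decode.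
Proof. by case=> n E; rewrite /graph_decode /graph_code pickleK /= nth_index // mem_enum. Qed.

Definition rp_extension (k : nat) (A : flatgraph k -> flatgraph k -> R) : Prop :=
  exists f : graph -> R,
    graph_param f /\ isolate_indifferent f /\ reflection_positive f /\
    forall F G : flatgraph k, A F G = f (as_graph (flat_prod F G)).

Definition psd_extension_at {k : nat} (A : flatgraph k -> flatgraph k -> R) {m : nat}
    (B : flatgraph m -> flatgraph m -> R) : Prop :=
  psd B /\
  (forall F1 G1 F2 G2 : flatgraph m,
     sim (as_graph (flat_prod F1 G1)) (as_graph (flat_prod F2 G2)) -> B F1 G1 = B F2 G2) /\
  (forall F G : flatgraph k, B (pad m F) (pad m G) = A F G).

Definition psd_extensions (k : nat) (A : flatgraph k -> flatgraph k -> R) : Prop :=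
  forall m : nat, k <= m -> exists B : flatgraph m -> flatgraph m -> R, psd_extension_at A B.

(* A flat m-labeled graph is an m-labeled graph without unlabeled nodes; the product
   of two of them is their flat product. *)
Definition flat_labeled {m} (X : flatgraph m) : klgraph m := exist _ (as_graph X) (leqnn m).

Lemma kprod_flat m (X Y : flatgraph m) :
  sim (kprod (flat_labeled X) (flat_labeled Y)) (as_graph (flat_prod X Y)).
Proof.
apply: sim_of_same_nadj => u v; rewrite nadj_kprod /= addnK.
case: (ltnP u m) => hu; last by rewrite nadj_outl.
case: (ltnP v m) => hv; last by rewrite nadj_outr.
rewrite /kprod_map hu hv nadj_flat_prod (nadj_sym (as_graph X) v) (nadj_sym (as_graph Y) v) orbb.
by case: eqP => [->|]; rewrite ?nadj_irr.
Qed.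

Lemma forward k (A : flatgraph k -> flatgraph k -> R) : rp_extension k A -> psd_extensions k A.
Proof.
move=> [f [_ [f_ii [f_rp f_A]]]] m km.
exists (fun F G => f (as_graph (flat_prod F G))); split; [|split].
- split=> [F G|c].
    by apply: f_ii; apply: sim_of_same_nadj => u v; rewrite !nadj_flat_prod orbC.
  have := (f_rp m #|{: flatgraph m}| (fun i => flat_labeled (enum_val i))).2 (fun i => c (enum_val i)).
  rewrite (reindex _ (onW_bij _ (@enum_val_bij (flatgraph m)))) /= => rp.
  apply: (Rle_trans _ _ _ rp); apply: Req_le; apply: eq_bigr => i _.
  rewrite (reindex _ (onW_bij _ (@enum_val_bij (flatgraph m)))) /=.
  by apply: eq_bigr => j _; rewrite (f_ii _ _ (kprod_flat _ _ _)).
- by move=> F1 G1 F2 G2; exact: f_ii.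
- move=> F G; rewrite f_A; apply: f_ii; apply: sim_of_same_nadj => u v.
  by rewrite !nadj_flat_prod !nadj_pad.
Qed.

(* For M at least the number of nodes of the graphs involved, the slot at
   offset o of an m-node flat graph consists of the positions p + o .. p + o + M - 1;
   together with the shared positions 0 .. p - 1 it carries a copy of a p-labeled
   graph G.  slot_read tells which node of G a position shows (p + M, a non-node of G,
   for positions outside the slot). *)
Definition slot_read (p M o a : nat) : nat :=
  if a < p then a else if (p + o <= a) && (a < p + o + M) then a - o else p + M.

Definition slot_graph (m p M : nat) (G : graph) (o : nat) : flatgraph m :=
  from_rel (fun x y : 'I_m => nadj G (slot_read p M o x) (slot_read p M o y)).

(* Where the nodes of F1 F2 go when F1 is copied into the slot at offset so and F2
   into the slot at offset to (n1 is the number of nodes of F1). *)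
Definition slot_place (p n1 so to u : nat) : nat :=
  if u < n1 then (if u < p then u else u + so) else u - n1 + p + to.

Lemma nadj_slot_graph m p M G o a b :
  nadj (as_graph (slot_graph m p M G o)) a b =
  [&& a < m, b < m, a != b & nadj G (slot_read p M o a) (slot_read p M o b)
                          || nadj G (slot_read p M o b) (slot_read p M o a)].
Proof. exact: (@nadj_from_rel m _ (fun a b => nadj G (slot_read p M o a) (slot_read p M o b))). Qed.

Ltac case_ifs := repeat (case: ifP => ?).

Section DisjointSlots.
Variables (p : nat) (F1 F2 : klgraph p) (M so to m : nat).
Local Notation n1 := (gn (val F1)).
Local Notation n2 := (gn (val F2)).
Hypotheses (n1_le_M : n1 <= M) (n2_le_M : n2 <= M).
Hypothesis slots_disjoint : so + M <= to \/ to + M <= so.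
Hypotheses (so_fits : p + so + M <= m) (to_fits : p + to + M <= m).
Let p_le_n1 : p <= n1 := valP F1.
Let p_le_n2 : p <= n2 := valP F2.
Local Notation place := (slot_place p n1 so to).

Lemma place_lt u : u < n1 + n2 - p -> place u < m.
Proof. by move=> hu; rewrite /slot_place; case_ifs; lia. Qed.

Lemma place_inj u v : u < n1 + n2 - p -> v < n1 + n2 - p -> place u = place v -> u = v.
Proof. by move=> hu hv; rewrite /slot_place; case_ifs; lia. Qed.

Lemma read_place1 u : u < n1 + n2 - p -> same_node n1 (slot_read p M so (place u)) u.
Proof. by move=> hu; rewrite /slot_place /same_node; case_ifs; rewrite /slot_read; case_ifs; lia. Qed.

Lemma read_place2 u : u < n1 + n2 - p ->
  same_node n2 (slot_read p M to (place u)) (kprod_map p n1 n2 u).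
Proof.
by move=> hu; rewrite /slot_place /kprod_map /same_node; case_ifs; rewrite /slot_read; case_ifs; lia.
Qed.

Lemma place_onto1 a : slot_read p M so a < n1 -> exists2 u, u < n1 + n2 - p & place u = a.
Proof.
rewrite /slot_read /slot_place; case: ifP => a_p.
  by move=> _; exists a; [lia | rewrite ifT ?a_p //; lia].
case: ifP => a_slot a_n1; last by lia.
by exists (a - so); [lia | rewrite ifT; [rewrite ifF; lia | lia]].
Qed.

Lemma place_onto2 a : slot_read p M to a < n2 -> exists2 u, u < n1 + n2 - p & place u = a.
Proof.
rewrite /slot_read /slot_place; case: ifP => a_p.
  by move=> _; exists a; [lia | rewrite ifT ?a_p //; lia].
case: ifP => a_slot a_n2; last by lia.
by exists (a - to - p + n1); [lia | rewrite ifF; lia].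
Qed.

Lemma slot_sim :
  sim (kprod F1 F2) (as_graph (flat_prod (slot_graph m p M (val F1) so)
                                         (slot_graph m p M (val F2) to))).
Proof.
apply: (@sim_of_node_map _ _ place).
- move=> u v /= hu hv.
  rewrite nadj_flat_prod !nadj_slot_graph nadj_kprod hu hv !place_lt //.
  have -> : (place u != place v) = (u != v).
    by apply/idP/idP; apply: contra => /eqP e; apply/eqP; [rewrite e | exact: place_inj].
  have read1 a b : a < n1 + n2 - p -> b < n1 + n2 - p ->
      nadj (val F1) (slot_read p M so (place a)) (slot_read p M so (place b)) = nadj (val F1) a b.
    by move=> ha hb; apply: nadj_same_node; exact: read_place1.
  have read2 a b : a < n1 + n2 - p -> b < n1 + n2 - p ->
      nadj (val F2) (slot_read p M to (place a)) (slot_read p M to (place b)) =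
      nadj (val F2) (kprod_map p n1 n2 a) (kprod_map p n1 n2 b).
    by move=> ha hb; apply: nadj_same_node; exact: read_place2.
  rewrite !read1 // !read2 //; case: (u != v) => //=.
  by case: (nadj (val F1) u v); case: (nadj (val F1) v u); case: (nadj (val F2) _ _);
    case: (nadj (val F2) _ _).
- by move=> u v /= hu hv; exact: place_inj.
- move=> a b; rewrite nadj_flat_prod !nadj_slot_graph => /orP [] /and4P [_ _ _ /orP []]
    /nadj_bound /andP [read_a read_b].
  + exact: place_onto1.
  + exact: place_onto1.
  + exact: place_onto2.
  + exact: place_onto2.
Qed.

End DisjointSlots.

(* Slot s of N slots of size M, at offset s * M. *)
Lemma slots_disjoint_ord (N M : nat) (s t : 'I_N) :
  s != t -> s * M + M <= t * M \/ t * M + M <= s * M.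
Proof.
move=> st; case: (ltngtP s t) => [lt|gt|eq]; last by rewrite (val_inj eq) eqxx in st.
- by left; rewrite addnC -mulSn leq_mul2r lt orbT.
- by right; rewrite addnC -mulSn leq_mul2r gt orbT.
Qed.

Lemma slot_fits (N M : nat) (s : 'I_N) : s * M + M <= N * M.
Proof. by rewrite addnC -mulSn leq_mul2r ltn_ord orbT. Qed.

Section Backward.
Local Open Scope R_scope.
Variables (k : nat) (A : flatgraph k -> flatgraph k -> R).
Variable B : forall m, flatgraph m -> flatgraph m -> R.
Hypothesis B_psd : forall m, (k <= m)%nat -> psd (B m).
Hypothesis B_sim : forall m, (k <= m)%nat -> forall F1 G1 F2 G2 : flatgraph m,
  sim (as_graph (flat_prod F1 G1)) (as_graph (flat_prod F2 G2)) -> B m F1 G1 = B m F2 G2.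
Hypothesis B_ext : forall m, (k <= m)%nat ->
  forall F G : flatgraph k, B m (pad m F) (pad m G) = A F G.

Lemma B_nadj m X Y X' Y' : (k <= m)%nat ->
  (forall u v, nadj (as_graph (flat_prod X' Y')) u v = nadj (as_graph (flat_prod X Y)) u v) ->
  B m X Y = B m X' Y'.
Proof. by move=> km XY; apply: B_sim => //; exact: sim_of_same_nadj. Qed.

Definition A0 : R := A (edgeless k) (edgeless k).

(* X X = X = X empty as flat graphs. *)
Lemma B_diag m X : (k <= m)%nat -> B m X X = B m X (edgeless m).
Proof. by move=> km; apply: B_nadj => // u v; rewrite !nadj_flat_prod nadj_edgeless orbF orbb. Qed.

Lemma B_edgeless m : (k <= m)%nat -> B m (edgeless m) (edgeless m) = A0.
Proof.
move=> km; rewrite /A0 -(B_ext _ km); apply: B_nadj => // u v.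
by rewrite !nadj_flat_prod nadj_edgeless !nadj_pad // nadj_edgeless.
Qed.

(* The 2x2 minor on X and the edgeless graph. *)
Lemma B_bounds m X : (k <= m)%nat -> 0 <= B m X (edgeless m) <= A0.
Proof.
move=> km; have [B_sym _] := B_psd _ km.
have h1 := psd_two _ X (edgeless m) 1 0 (B_psd _ km).
have h2 := psd_two _ X (edgeless m) 1 (-1) (B_psd _ km).
rewrite (B_sym (edgeless m) X) B_diag // B_edgeless // in h1 h2.
lra.
Qed.

Lemma A0_ge0 : 0 <= A0.
Proof. by have := B_bounds _ (edgeless k) (leqnn k); lra. Qed.

(* B(X,Y) = B(XY, empty). *)
Lemma B_abs m X Y : (k <= m)%nat -> Rabs (B m X Y) <= A0.
Proof.
move=> km; rewrite (@B_nadj m X Y (flat_prod X Y) (edgeless m)) //.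
  by have bnd := B_bounds _ (flat_prod X Y) km; rewrite Rabs_pos_eq; lra.
by move=> u v; rewrite !nadj_flat_prod nadj_edgeless orbF.
Qed.

(* The value of a graph at level m (0 below level k). *)
Definition level (m : nat) (G : graph) : R :=
  if (k <= m)%nat then B m (pad m (gE G)) (edgeless m) else 0.

Lemma level_bounds m G : 0 <= level m G <= A0.
Proof. by rewrite /level; case: ifP => km; [exact: B_bounds | have := A0_ge0; lra]. Qed.

Lemma level_sim m G H : sim G H -> (k <= m)%nat -> (gn G <= m)%nat -> (gn H <= m)%nat ->
  level m G = level m H.
Proof.
move=> GH km Gm Hm; rewrite /level km; apply: B_sim => //.
apply: (@sim_trans _ G); first exact: sim_sym (pad_sim Gm).
exact: sim_trans GH (pad_sim Hm).
Qed.

Lemma level_flat_prod m F G : (k <= m)%nat -> level m (as_graph (flat_prod F G)) = A F G.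
Proof.
move=> km; rewrite /level km -(B_ext _ km F G); apply: B_nadj => // u v.
by rewrite !nadj_flat_prod !nadj_pad // (nadj_edgeless m) orbF /= nadj_flat_prod.
Qed.

Definition slot_size {p n} (F : 'I_n -> klgraph p) : nat := \max_(i < n) gn (val (F i)).

Lemma slot_size_ge {p n} (F : 'I_n -> klgraph p) i : (gn (val (F i)) <= slot_size F)%nat.
Proof. exact: (@leq_bigmax _ (fun i => gn (val (F i))) i). Qed.

Definition slot_copy m {p n} (F : 'I_n -> klgraph p) {N} (i : 'I_n) (s : 'I_N) : flatgraph m :=
  slot_graph m p (slot_size F) (val (F i)) (s * slot_size F).

Lemma B_slot_copies p n (F : 'I_n -> klgraph p) N m (s t : 'I_N) i j :
  (k <= m)%nat -> (p + N * slot_size F + 2 * slot_size F <= m)%nat -> s != t ->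
  B m (slot_copy m F i s) (slot_copy m F j t) = level m (kprod (F i) (F j)).
Proof.
move=> km fits st; rewrite /level km; apply: B_sim => //.
have Fi := slot_size_ge F i; have Fj := slot_size_ge F j.
have s_fits := slot_fits N (slot_size F) s; have t_fits := slot_fits N (slot_size F) t.
have kprod_m : (gn (val (F i)) + gn (val (F j)) - p <= m)%nat by lia.
apply: (@sim_trans _ (kprod (F i) (F j))); last exact: (@pad_sim m (kprod (F i) (F j)) kprod_m).
by apply: sim_sym; apply: slot_sim => //; [exact: slots_disjoint_ord | lia | lia].
Qed.

(* sum of |c i| |c j|, which controls the terms of B m on copies in a common slot *)
Definition abs_mass {I : finType} (c : I -> R) : R :=
  \big[Rplus/0]_(i : I) \big[Rplus/0]_(j : I) (Rabs (c i) * Rabs (c j)).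

Lemma abs_mass_ge0 {I : finType} (c : I -> R) : 0 <= abs_mass c.
Proof.
apply: (big_ind (fun x => 0 <= x)) => [|x y|i _]; try lra.
apply: (big_ind (fun x => 0 <= x)) => [|x y|j _]; try lra.
exact: Rmult_le_pos (Rabs_pos _) (Rabs_pos _).
Qed.

(* Positivity of B m on the N slot copies of the F i, with coefficients c i in every
   slot: the N (N - 1) off-diagonal slot pairs contribute the quadratic form of the
   levels of the F i F j, the N diagonal ones at most A0 * abs_mass c each. *)
Lemma slot_form_bound p n (F : 'I_n -> klgraph p) (c : 'I_n -> R) N m :
  (1 < N)%nat -> (k <= m)%nat -> (p + N * slot_size F + 2 * slot_size F <= m)%nat ->
  0 <= A0 * abs_mass c + (INR N - 1) * qform (fun i j => level m (kprod (F i) (F j))) c.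
Proof.
move=> N_gt1 km fits.
pose X (a : 'I_N * 'I_n) := slot_copy m F a.2 a.1.
pose T (s t : 'I_N) := qform (fun i j => B m (slot_copy m F i s) (slot_copy m F j t)) c.
set Q := qform _ c; set S := abs_mass c.
have split_slots : qform (fun a b => B m (X a) (X b)) (fun a => c a.2) =
    \big[Rplus/0]_s \big[Rplus/0]_t T s t.
  rewrite /qform sumR_pair; apply: eq_bigr => s _.
  under eq_bigr do rewrite sumR_pair.
  by rewrite exchange_big.
have T_off s t : s != t -> T s t = Q.
  move=> st; apply: eq_bigr => i _; apply: eq_bigr => j _.
  by rewrite B_slot_copies.
have T_diag s : T s s <= A0 * S.
  rewrite /S /abs_mass -sumR_mull; apply: sumR_le => i _.
  rewrite -sumR_mull; apply: sumR_le => j _.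
  exact: quad_term_le (B_abs _ _ _ km).
have row s : \big[Rplus/0]_t T s t <= A0 * S + (INR N - 1) * Q.
  have row_eq : \big[Rplus/0]_t T s t = T s s - Q + \big[Rplus/0]_(t : 'I_N) Q.
    rewrite (bigD1 s) //= [in RHS](bigD1 s) //= (eq_bigr (fun _ => Q)) => [|t ts].
      by ring.
    by apply: T_off; rewrite eq_sym.
  by rewrite row_eq sumR_const card_ord; have := T_diag s; lra.
have := (psd_pullback _ X (B_psd _ km)).2 (fun a => c a.2).
rewrite -/(qform _ _) split_slots => total.
have sum_le : \big[Rplus/0]_s \big[Rplus/0]_t T s t <=
    \big[Rplus/0]_(s : 'I_N) (A0 * S + (INR N - 1) * Q) by apply: sumR_le => s _; exact: row.
rewrite sumR_const card_ord in sum_le.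
have N_pos : 0 < INR N by apply: lt_0_INR; lia.
by apply: (Rmult_le_reg_l (INR N)) => //; lra.
Qed.

Lemma level_cluster_point : exists lim : nat -> R, forall (L N : nat) eps, 0 < eps ->
  exists2 m, (N <= m)%nat &
    forall i, (i <= L)%nat -> Rabs (level m (graph_decode i) - lim i) <= eps.
Proof. exact: bounded_cluster_point (fun m i => level_bounds m _). Qed.

Section Limit.
Variable lim : nat -> R.
Hypothesis lim_cluster : forall (L N : nat) eps, 0 < eps -> exists2 m, (N <= m)%nat &
  forall i, (i <= L)%nat -> Rabs (level m (graph_decode i) - lim i) <= eps.

Definition limit_param (G : graph) : R := lim (graph_code G).

Lemma limit_approx (L N : nat) {eps} : 0 < eps -> exists2 m, (N <= m)%nat &
  forall G, (graph_code G <= L)%nat -> Rabs (level m G - limit_param G) <= eps.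
Proof.
move=> eps_pos; have [m Nm close] := lim_cluster L N eps eps_pos.
by exists m => // G GL; have := close _ GL; rewrite graph_codeK.
Qed.

Lemma limit_const G x m0 : (forall m, (m0 <= m)%nat -> level m G = x) -> limit_param G = x.
Proof.
move=> levelG; apply: eq_of_close => eps eps_pos.
have [m m0m close] := limit_approx (graph_code G) m0 eps_pos.
by rewrite -(levelG m m0m) Rabs_minus_sym; exact: close.
Qed.

Lemma limit_eq G H m0 : (forall m, (m0 <= m)%nat -> level m G = level m H) ->
  limit_param G = limit_param H.
Proof.
move=> GH; apply: eq_of_close => eps eps_pos.
have [m m0m close] := limit_approx (maxn (graph_code G) (graph_code H)) m0 (eps := eps / 2) ltac:(lra).
have := close G (leq_maxl _ _); have := close H (leq_maxr _ _); rewrite (GH m m0m).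
move=> h1 h2; have := Rabs_triang (limit_param G - level m H) (level m H - limit_param H).
rewrite Rabs_minus_sym in h2; have -> : limit_param G - limit_param H =
  limit_param G - level m H + (level m H - limit_param H) by ring.
lra.
Qed.

Lemma limit_isolate_indifferent : isolate_indifferent limit_param.
Proof.
move=> G H GH; apply: (@limit_eq _ _ (maxn k (maxn (gn G) (gn H)))) => m m_big.
by apply: level_sim => //; lia.
Qed.

Lemma limit_extends F G : A F G = limit_param (as_graph (flat_prod F G)).
Proof. by symmetry; apply: (@limit_const _ _ k) => m km; exact: level_flat_prod. Qed.

Lemma limit_slot_bound p n (F : 'I_n -> klgraph p) (c : 'I_n -> R) (N : nat) eps :
  (1 < N)%nat -> 0 < eps ->
  0 <= A0 * abs_mass c +
       (INR N - 1) * (qform (fun i j => limit_param (kprod (F i) (F j))) c + eps * abs_mass c).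
Proof.
move=> N_gt1 eps_pos.
pose L := \max_(i < n) \max_(j < n) graph_code (kprod (F i) (F j)).
have code_le i j : (graph_code (kprod (F i) (F j)) <= L)%nat.
  apply: leq_trans (@leq_bigmax _ (fun j => graph_code (kprod (F i) (F j))) j) _.
  exact: (@leq_bigmax _ (fun i => \max_(j < n) graph_code (kprod (F i) (F j))) i).
have [m m_big close] := limit_approx L (maxn k (p + N * slot_size F + 2 * slot_size F)) eps_pos.
have := @slot_form_bound p n F c N m N_gt1 ltac:(lia) ltac:(lia).
have : qform (fun i j => level m (kprod (F i) (F j))) c <=
       qform (fun i j => limit_param (kprod (F i) (F j))) c + eps * abs_mass c.
  rewrite /abs_mass -sumR_mull -big_split; apply: sumR_le => i _.
  rewrite -sumR_mull -big_split; apply: sumR_le => j _.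
  exact: quad_term_close (close _ (code_le i j)).
have : 0 <= INR N - 1 by have := lt_1_INR N ltac:(lia); lra.
nra.
Qed.

(* Symmetry: F i F j and F j F i are realised by the same two slot copies in swapped
   order, and B m is symmetric.  Positivity: nonneg_of_slot_bounds. *)
Lemma limit_reflection_positive : reflection_positive limit_param.
Proof.
move=> p n F; split=> [i j|c].
- apply: (@limit_eq _ _ (maxn k (p + 2 * slot_size F + 2 * slot_size F))) => m m_big.
  have km : (k <= m)%nat by lia.
  have fits : (p + 2 * slot_size F + 2 * slot_size F <= m)%nat by lia.
  rewrite -(@B_slot_copies _ _ _ _ _ (ord0 : 'I_2) ord_max i j km fits isT).
  rewrite -(@B_slot_copies _ _ _ _ _ (ord_max : 'I_2) ord0 j i km fits isT).
  exact: (B_psd _ km).1.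
- apply: (nonneg_of_slot_bounds (abs_mass_ge0 c)) => N eps N_gt1 eps_pos.
  exact: limit_slot_bound.
Qed.

Lemma limit_rp_extension : rp_extension k A.
Proof.
exists limit_param; split; [|split; [|split]].
- by move=> G H /iso_sim; exact: limit_isolate_indifferent.
- exact: limit_isolate_indifferent.
- exact: limit_reflection_positive.
- exact: limit_extends.
Qed.

End Limit.

Lemma psd_extensions_rp : rp_extension k A.
Proof. by have [lim lim_cluster] := level_cluster_point; exact: limit_rp_extension lim_cluster. Qed.

End Backward.

(* Backward direction: choose the matrices B m (arbitrarily below level k). *)
Lemma backward k (A : flatgraph k -> flatgraph k -> R) : psd_extensions k A -> rp_extension k A.
Proof.
move=> exts.
have pick m : {B : flatgraph m -> flatgraph m -> R | (k <= m)%nat -> psd_extension_at A B}.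
  apply: constructive_indefinite_description.
  case: (boolP (k <= m)) => [km|_]; first by have [B extB] := exts m km; exists B.
  by exists (fun _ _ => 0%R).
by apply: (@psd_extensions_rp k A (fun m => sval (pick m))) => m km;
  case: (svalP (pick m) km) => [? [? ?]].
Qed.

Theorem mainTheorem9 (k : nat) (A : flatgraph k -> flatgraph k -> R)
  (Asym : forall F G, A F G = A G F) :
  (exists f : graph -> R,
     graph_param f /\ isolate_indifferent f /\ reflection_positive f /\
     forall F G : flatgraph k, A F G = f (as_graph (flat_prod F G)))
  <->
  (forall m : nat, k <= m ->
     exists B : flatgraph m -> flatgraph m -> R,
       psd B /\
       (forall F1 G1 F2 G2 : flatgraph m,
          sim (as_graph (flat_prod F1 G1)) (as_graph (flat_prod F2 G2)) -> B F1 G1 = B F2 G2) /\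
       (forall F G : flatgraph k, B (pad m F) (pad m G) = A F G)).
Proof. by split; [exact: forward | exact: backward]. Qed.
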